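(* Let $T$ be a finite set and $\mathcal{M}_T$ a matroid on $T$. Suppose $T=S_j\uplus P_j$ for $j=1,\dots,n$, and $\mathcal{M}_T$ is $\{S_j,P_j\}$-complete for every $j=1,\dots,n$. Let $\{T_1,\dots,T_k\}$ be a partition of $T$ (blocks may be empty) such that for each pair $m\neq m'$ there is some $j$ with $T_m\subseteq S_j$ and $T_{m'}\subseteq P_j$. Then: 1. If $Q\subseteq T$ and $\mathcal{M}_Q$ is a minor of $\mathcal{M}_T$ on $Q$, then $\mathcal{M}_Q$ is $\{S_j\cap Q,P_j\cap Q\}$-complete for $j=1,\dots,n$. 2. If $\{Q_1,\dots,Q_k\}$ is a partition of a set $Q\subseteq T$ with $Q_j\subseteq T_j$ for $j=1,\dots,k$, then for all $i\neq j$ in $\{1,\dots,k\}$, every minor $\mathcal{M}_{Q_iQ_j}$ of $\mathcal{M}_T$ on $Q_i\uplus Q_j$ is $\{Q_i,Q_j\}$-complete.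
   Context: Matroids are on finite sets, given by their bases. A minor of $\mathcal{M}$ on $Q$ is a matroid $\mathcal{M}\circ A\times Q$ with $Q\subseteq A$, where $\circ$ is restriction (independent sets inside $A$) and $\times$ is contraction (bases = minimal sets $b\cap Q$, $b$ a base). For a partition $\{A,B\}$ of the ground set of a matroid $\mathcal{M}_{AB}$ (blocks may be empty), $\mathcal{M}_{AB}$ is $\{A,B\}$-complete if whenever $b_A,b'_A\subseteq A$, $b_B,b'_B\subseteq B$ and $b_A\uplus b_B$, $b_A\uplus b'_B$, $b'_A\uplus b_B$ are bases, then $b'_A\uplus b'_B$ is a base. *)

From mathcomp Require Import all_boot.
Set Implicit Arguments. Unset Strict Implicit. Unset Printing Implicit Defensive.

Section Matroid.
Variable U : finType.

Definition is_matroid (E : {set U}) (B : {set {set U}}) : Prop :=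
  [/\ B != set0,
      (forall b, b \in B -> b \subset E) &
      (forall b1 b2, b1 \in B -> b2 \in B -> forall x, x \in b1 :\: b2 ->
         exists2 y, y \in b2 :\: b1 & (y |: (b1 :\ x)) \in B)].

Definition indep (B : {set {set U}}) (X : {set U}) : bool :=
  [exists b in B, X \subset b].

Definition restr (B : {set {set U}}) (A : {set U}) : {set {set U}} :=
  [set X | maxset (fun Y => (Y \subset A) && indep B Y) X].

Definition contr (B : {set {set U}}) (Q : {set U}) : {set {set U}} :=
  [set X | minset (fun Y => [exists b in B, Y == b :&: Q]) X].

Definition is_minor (E : {set U}) (B : {set {set U}}) (Q : {set U})
    (BQ : {set {set U}}) : Prop :=
  exists A : {set U}, [/\ Q \subset A, A \subset E & BQ = contr (restr B A) Q].

(* {A,B}-completeness of a matroid with bases BM (A, B are the blocks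
   of a partition of its ground set) *)
Definition complete (BM : {set {set U}}) (A B : {set U}) : Prop :=
  forall bA bA' bB bB' : {set U},
    bA \subset A -> bA' \subset A -> bB \subset B -> bB' \subset B ->
    (bA :|: bB) \in BM -> (bA :|: bB') \in BM -> (bA' :|: bB) \in BM ->
    (bA' :|: bB') \in BM.

End Matroid.

From mathcomp Require Import all_boot zify.
Set Implicit Arguments. Unset Strict Implicit. Unset Printing Implicit Defensive.

(* Let Q <= A <= E.  Fix a maximal independent set Z inside A :\: Q and a base b0
   of M whose trace on A is maximal independent in A.  Then J <= Q is a base of
   (M o A) x Q iff J :|: Z is maximal independent in A, iff J :|: Z :|: b0 :\: A
   is a base of M.  So the bases of a minor on Q are the sets J <= Q for which
   J :|: V is a base of M, for a fixed set V outside Q.  Splitting V along {S, P} turns the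
   four bases of the minor in the completeness condition into four bases of M of
   the required shape, so {S, P}-completeness passes to {S :&: Q, P :&: Q}.
   Part 2 then follows by choosing j with T_i <= S_j and T_i' <= P_j, since
   S_j and P_j cut Q_i :|: Q_i' exactly into Q_i and Q_i'. *)

Section SetFacts.
Variable U : finType.
Implicit Types X Y S P V : {set U}.

Lemma setIU_disjoint X Y S : X \subset S -> [disjoint Y & S] -> (X :|: Y) :&: S = X.
Proof.
by move=> sXS dYS; rewrite setIUl (setIidPl sXS) (disjoint_setI0 dYS) setU0.
Qed.

Lemma setDU_disjoint X Y S : X \subset S -> [disjoint Y & S] -> (X :|: Y) :\: S = Y.
Proof.
move=> sXS dYS; rewrite setDE setUC setIU_disjoint //; first by rewrite -disjoints_subset.
by rewrite disjoints_subset setCK.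
Qed.

Lemma setUI_regroup X Y V S P : V \subset S :|: P ->
  (X :|: V :&: S) :|: (Y :|: V :&: P) = (X :|: Y) :|: V.
Proof. by move=> sV; rewrite setUACA -setIUr (setIidPl sV). Qed.

Lemma card_exchange X Y x y : x \in X :\: Y -> y \in Y :\: X ->
  #|y |: (X :\ x)| = #|X| /\ #|(y |: (X :\ x)) :\: Y| < #|X :\: Y|.
Proof.
rewrite !inE => /andP[xNY xX] /andP[yNX yY]; split.
  by rewrite cardsU1 !inE negb_and yNX orbT (cardsD1 x X) xX.
rewrite (cardsD1 x (X :\: Y)) !inE xNY xX ltnS subset_leq_card //.
apply/subsetP=> z; rewrite !inE => /andP[zNY /orP[/eqP zy|]].
  by rewrite zy yY in zNY.
by rewrite zNY.
Qed.

End SetFacts.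

Section MatroidBases.
Variables (U : finType) (E : {set U}) (B : {set {set U}}).
Hypothesis matroidB : is_matroid E B.
Implicit Types X Y A Q I J L M Z b c : {set U}.

Lemma base_exchange b1 b2 x : b1 \in B -> b2 \in B -> x \in b1 :\: b2 ->
  exists2 y, y \in b2 :\: b1 & y |: (b1 :\ x) \in B.
Proof. by move=> b1B b2B xb1; case: matroidB => _ _ exB; apply: exB b1B b2B x xb1. Qed.

Lemma base_exchange_closer b1 b2 x : b1 \in B -> b2 \in B -> x \in b1 :\: b2 ->
  exists2 b, b \in B & [/\ b1 :\ x \subset b, #|b| = #|b1| & #|b :\: b2| < #|b1 :\: b2|].
Proof.
move=> b1B b2B xb1; have [y yb2 exB] := base_exchange b1B b2B xb1.
have [card_eq card_lt] := card_exchange xb1 yb2.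
by exists (y |: (b1 :\ x)); last split; rewrite ?subsetUr.
Qed.

Lemma card_base b1 b2 : b1 \in B -> b2 \in B -> #|b1| = #|b2|.
Proof.
move=> b1B b2B; have [m] := ubnP #|b1 :\: b2|; elim: m => // m IH in b1 b1B *.
case: (set_0Vmem (b1 :\: b2)) => [b1Db2 _ | [x xb1] ltm].
  case: (set_0Vmem (b2 :\: b1)) => [b2Db1 | [x xb2]].
    by apply/eqP; rewrite eqn_leq !subset_leq_card -?setD_eq0 ?b1Db2 ?b2Db1.
  by have [y] := base_exchange b2B b1B xb2; rewrite b1Db2 inE.
have [b bB [_ <- ltb]] := base_exchange_closer b1B b2B xb1.
by apply: IH => //; exact: leq_trans ltb ltm.
Qed.

Lemma indepP X : reflect (exists2 b, b \in B & X \subset b) (indep B X).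
Proof. by apply: (iffP exists_inP) => -[b]; exists b. Qed.

Lemma base_indep b : b \in B -> indep B b.
Proof. by move=> bB; apply/indepP; exists b. Qed.

Lemma indep0 : indep B set0.
Proof. by case: matroidB => /set0Pn[b bB] _ _; apply/indepP; exists b; rewrite ?sub0set. Qed.

Lemma indep_subset X Y : indep B X -> Y \subset X -> indep B Y.
Proof.
by move=> /indepP[b bB sXb] sYX; apply/indepP; exists b; last exact: subset_trans sXb.
Qed.

Lemma card_indep I b : indep B I -> b \in B -> #|I| <= #|b|.
Proof. by move=> /indepP[b' b'B sIb'] bB; rewrite (card_base bB b'B) subset_leq_card. Qed.

Lemma indep_card_base I b : indep B I -> b \in B -> #|b| <= #|I| -> I \in B.
Proof.
move=> /indepP[b' b'B sIb'] bB leb.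
by rewrite (eqP (_ : I == b')) // eqEcard sIb' -(card_base bB b'B).
Qed.

Lemma indep_augment I1 I2 : indep B I1 -> indep B I2 -> #|I1| < #|I2| ->
  exists2 x, x \in I2 :\: I1 & indep B (x |: I1).
Proof.
move=> /indepP[b1 b1B sI1b1] /indepP[b2 b2B sI2b2] ltI12.
(* Exchange the elements of b1 outside b2 :|: I1 for elements of b2; once
   b1 \subset (b2 :\: I2) :|: I1, counting gives #|I2| <= #|I1|. *)
have [m] := ubnP #|b1 :\: b2|; elim: m => // m IH in b1 b1B sI1b1 *.
case: (boolP (b1 \subset (b2 :\: I2) :|: I1)) => [sb1 _ | /subsetPn[z zb1]].
  have: #|b1| <= #|b2 :\: I2| + #|I1|.
    by rewrite (leq_trans (subset_leq_card sb1)) ?leq_card_setU.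
  have := cardsID I2 b2; rewrite (setIidPr sI2b2) (card_base b1B b2B); lia.
rewrite !inE negb_or negb_and negbK => /andP[/orP[zI2 | zNb2] zNI1] ltm.
  exists z; first by rewrite inE zNI1 zI2.
  by apply/indepP; exists b1; rewrite // subUset sub1set zb1.
have zb1Db2 : z \in b1 :\: b2 by rewrite inE zNb2.
have [b bB [sb1b _ ltb]] := base_exchange_closer b1B b2B zb1Db2.
apply: IH bB _ (leq_trans ltb ltm); apply: subset_trans sb1b.
by rewrite subsetD1 sI1b1.
Qed.

Lemma indep_extend I J : indep B I -> indep B J -> #|I| <= #|J| ->
  exists L, [/\ I \subset L, L \subset I :|: J, indep B L & #|L| = #|J|].
Proof.
move=> + indJ; have [m] := ubnP (#|J| - #|I|); elim: m => // m IH in I *.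
move=> ltm indI; rewrite leq_eqVlt => /orP[/eqP eqIJ | ltIJ].
  by exists I; rewrite subxx subsetUl.
have [x] := indep_augment indI indJ ltIJ; rewrite inE => /andP[xNI xJ] indxI.
have cardxI : #|x |: I| = #|I|.+1 by rewrite cardsU1 xNI.
have [||L [sxIL sLxIJ indL cardL]] := IH (x |: I) _ indxI _; rewrite ?cardxI //; first lia.
exists L; split=> //; first exact: subset_trans (subsetU1 x I) sxIL.
by apply: subset_trans sLxIJ _; rewrite -setUA subUset sub1set !inE xJ orbT subxx.
Qed.

Lemma restr_sub A M : M \in restr B A -> M \subset A.
Proof. by rewrite inE => /maxsetP[/andP[]]. Qed.

Lemma restr_indep A M : M \in restr B A -> indep B M.
Proof. by rewrite inE => /maxsetP[/andP[]]. Qed.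

Lemma restr_maximal A M I : M \in restr B A ->
  I \subset A -> indep B I -> M \subset I -> I = M.
Proof. by rewrite inE => /maxsetP[_ maxM] sIA indI; apply: maxM; rewrite /= sIA. Qed.

Lemma card_indep_restr A M I : M \in restr B A ->
  I \subset A -> indep B I -> #|I| <= #|M|.
Proof.
move=> MA sIA indI; rewrite leqNgt; apply/negP => /(indep_augment (restr_indep MA) indI).
case=> x; rewrite inE => /andP[xNM xI] indxM.
have sxMA : x |: M \subset A by rewrite subUset sub1set (subsetP sIA) ?restr_sub.
have /setP/(_ x) := restr_maximal MA sxMA indxM (subsetU1 x M).
by rewrite setU11 (negbTE xNM).
Qed.

Lemma card_restr A M M' : M \in restr B A -> M' \in restr B A -> #|M| = #|M'|.
Proof.
move=> MA M'A; apply/eqP; rewrite eqn_leq.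
rewrite (card_indep_restr M'A (restr_sub MA) (restr_indep MA)).
by rewrite (card_indep_restr MA (restr_sub M'A) (restr_indep M'A)).
Qed.

Lemma restr_card A M I : M \in restr B A ->
  I \subset A -> indep B I -> #|M| <= #|I| -> I \in restr B A.
Proof.
move=> MA sIA indI leMI; rewrite inE; apply/maxsetP; split=> [|Y /andP[sYA indY] sIY].
  by rewrite sIA.
apply/eqP; rewrite eq_sym eqEcard sIY (leq_trans (card_indep_restr MA sYA indY)) //.
Qed.

Lemma restr_exists A : exists M, M \in restr B A.
Proof.
have P0 : (set0 \subset A) && indep B set0 by rewrite sub0set indep0.
have [M maxM _] := @maxset_exists _ (fun Y => (Y \subset A) && indep B Y) _ P0.
by exists M; rewrite inE.
Qed.

Lemma restr_base_trace A : exists2 b, b \in B & b :&: A \in restr B A.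
Proof.
have [M MA] := restr_exists A; have /indepP[b bB sMb] := restr_indep MA.
exists b => //; rewrite (@restr_maximal A M (b :&: A)) ?subsetIr //.
  exact: indep_subset (base_indep bB) (subsetIl b A).
by rewrite subsetI sMb restr_sub.
Qed.

Lemma restr_base_complement A b0 c : b0 \in B -> b0 :&: A \in restr B A ->
  c \subset A -> (c \in restr B A) = (c :|: b0 :\: A \in B).
Proof.
move=> b0B traceA scA.
have db0A : [disjoint b0 :\: A & A] by rewrite disjoints_subset setDE subsetIr.
have cardb0 := cardsID A b0.
apply/idP/idP => [cA | cb0B].
  have indc := restr_indep cA.
  have [L [scL sLcb0 indL cardL]] :=
    indep_extend indc (base_indep b0B) (card_indep indc b0B).
  have LB : L \in B by rewrite (indep_card_base indL b0B) ?cardL.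
  have LA : L :&: A = c.
    apply: restr_maximal cA (subsetIr L A) (indep_subset indL (subsetIl L A)) _.
    by rewrite subsetI scL scA.
  have sLDb0 : L :\: A \subset b0 :\: A.
    apply: subset_trans (setSD A sLcb0) _.
    by rewrite setDUl (_ : c :\: A = set0) ?set0U //; apply/eqP; rewrite setD_eq0.
  have LDb0 : L :\: A = b0 :\: A.
    apply/eqP; rewrite eqEcard sLDb0 /=.
    have := cardsID A L; have := card_restr cA traceA; rewrite LA (card_base LB b0B); lia.
  by rewrite -LA -LDb0 setID.
have indc : indep B c := indep_subset (base_indep cb0B) (subsetUl c (b0 :\: A)).
apply: (restr_card traceA scA indc).
have := card_base cb0B b0B; have := cardsID A (c :|: b0 :\: A).
rewrite setIU_disjoint ?setDU_disjoint //; lia.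
Qed.

Lemma contr_restr_base A Q Z J : Q \subset A -> Z \in restr B (A :\: Q) ->
  J \subset Q -> (J \in contr (restr B A) Q) = (J :|: Z \in restr B A).
Proof.
move=> sQA ZAQ sJQ; have indZ := restr_indep ZAQ.
have dZQ : [disjoint Z & Q].
  by rewrite disjoints_subset (subset_trans (restr_sub ZAQ)) // setDE subsetIr.
have sZA : Z \subset A := subset_trans (restr_sub ZAQ) (subsetDl A Q).
apply/idP/idP => [|JZA].
  rewrite inE => /minsetP[/exists_inP[c cA /eqP Jc] minJ].
  have [L [sZL sLZc indL cardL]] :=
    indep_extend indZ (restr_indep cA) (card_indep_restr cA sZA indZ).
  have sLA : L \subset A by apply: subset_trans sLZc _; rewrite subUset sZA restr_sub.
  have LA : L \in restr B A by rewrite (restr_card cA) ?cardL.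
  have LQ : L :&: Q = J.
    apply: minJ; first by apply/exists_inP; exists L.
    rewrite Jc; apply: subset_trans (setSI Q sLZc) _.
    by rewrite setIUl (disjoint_setI0 dZQ) set0U.
  have LDQ : L :\: Q = Z.
    apply: restr_maximal ZAQ (setSD Q sLA) (indep_subset indL (subsetDl L Q)) _.
    by rewrite subsetD sZL dZQ.
  by rewrite -LQ -LDQ setID.
rewrite inE; apply/minsetP; split=> [|_ /exists_inP[c cA /eqP ->] scQJ].
  by apply/exists_inP; exists (J :|: Z); rewrite // setIU_disjoint.
apply/eqP; rewrite eqEcard scQJ /=.
have indcDQ := indep_subset (restr_indep cA) (subsetDl c Q).
have := card_indep_restr ZAQ (setSD Q (restr_sub cA)) indcDQ.
have := cardsID Q (J :|: Z); rewrite setIU_disjoint ?setDU_disjoint // (card_restr JZA cA).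
have := cardsID Q c; lia.
Qed.

Lemma base_sub b : b \in B -> b \subset E.
Proof. by case: matroidB => _ sBE _; apply: sBE. Qed.

Lemma minor_bases Q BQ : is_minor E B Q BQ ->
  exists2 V : {set U}, V \subset E &
    forall J, J \subset Q -> (J \in BQ) = (J :|: V \in B).
Proof.
case=> A [sQA sAE ->].
have [Z ZAQ] := restr_exists (A :\: Q); have [b0 b0B traceA] := restr_base_trace A.
have sZA : Z \subset A := subset_trans (restr_sub ZAQ) (subsetDl A Q).
exists (Z :|: b0 :\: A).
  by rewrite subUset (subset_trans sZA sAE) (subset_trans (subsetDl b0 A) (base_sub b0B)).
move=> J sJQ; rewrite (contr_restr_base sQA ZAQ sJQ).
by rewrite (restr_base_complement b0B traceA) ?setUA // subUset sZA (subset_trans sJQ sQA).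
Qed.

End MatroidBases.

Lemma complete_shift (U : finType) (B BQ : {set {set U}}) (S P Q V : {set U}) :
  complete B S P -> V \subset S :|: P ->
  (forall J : {set U}, J \subset Q -> (J \in BQ) = (J :|: V \in B)) ->
  complete BQ (S :&: Q) (P :&: Q).
Proof.
move=> complB sV BQV bA bA' bB bB' sA sA' sB sB'.
have shift (X Y : {set U}) : X \subset S :&: Q -> Y \subset P :&: Q ->
    (X :|: Y \in BQ) = ((X :|: V :&: S) :|: (Y :|: V :&: P) \in B).
  move=> sX sY; rewrite setUI_regroup // BQV // subUset.
  by rewrite (subset_trans sX) ?(subset_trans sY) ?subsetIr.
have shiftS (X : {set U}) : X \subset S :&: Q -> X :|: V :&: S \subset S.
  by move=> sX; rewrite subUset subsetIr (subset_trans sX) ?subsetIl.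
have shiftP (Y : {set U}) : Y \subset P :&: Q -> Y :|: V :&: P \subset P.
  by move=> sY; rewrite subUset subsetIr (subset_trans sY) ?subsetIl.
rewrite !shift //.
exact: complB (shiftS _ sA) (shiftS _ sA') (shiftP _ sB) (shiftP _ sB').
Qed.

Lemma minor_complete (U : finType) (E : {set U}) (B BQ : {set {set U}}) (S P Q : {set U}) :
  is_matroid E B -> S :|: P = E -> complete B S P -> is_minor E B Q BQ ->
  complete BQ (S :&: Q) (P :&: Q).
Proof.
move=> matroidB defE complB /(minor_bases matroidB)[V sVE BQV].
by apply: complete_shift complB _ BQV; rewrite defE.
Qed.

Theorem corollary2 (U : finType) (T : {set U}) (B : {set {set U}})
  (n : nat) (S P : 'I_n -> {set U}) (k : nat) (Ts : 'I_k -> {set U}) :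
  is_matroid T B ->
  (forall j, S j :|: P j = T /\ [disjoint S j & P j]) ->
  (forall j, complete B (S j) (P j)) ->
  \bigcup_(m < k) Ts m = T ->
  (forall m m', m != m' -> [disjoint Ts m & Ts m']) ->
  (forall m m', m != m' -> exists j, Ts m \subset S j /\ Ts m' \subset P j) ->
  (forall (Q : {set U}) (BQ : {set {set U}}), Q \subset T ->
     is_minor T B Q BQ -> forall j, complete BQ (S j :&: Q) (P j :&: Q))
  /\
  (forall (Q : {set U}) (Qs : 'I_k -> {set U}),
     Q \subset T ->
     \bigcup_(m < k) Qs m = Q ->
     (forall m m', m != m' -> [disjoint Qs m & Qs m']) ->
     (forall m, Qs m \subset Ts m) ->
     forall i j, i != j ->
     forall BQ : {set {set U}}, is_minor T B (Qs i :|: Qs j) BQ ->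
       complete BQ (Qs i) (Qs j)).
Proof.
move=> matroidB partSP complSP _ _ separated.
split=> [Q BQ _ minorQ j | Q Qs _ _ _ sQsTs i j neq_ij BQ minorQ].
  by have [defT _] := partSP j; apply: minor_complete matroidB defT (complSP j) minorQ.
have [l [sTiS sTjP]] := separated i j neq_ij; have [defT dSP] := partSP l.
have sQiS : Qs i \subset S l := subset_trans (sQsTs i) sTiS.
have sQjP : Qs j \subset P l := subset_trans (sQsTs j) sTjP.
have dQjS : [disjoint Qs j & S l] by rewrite disjoint_sym (disjointWr sQjP dSP).
have dQiP : [disjoint Qs i & P l] := disjointWl sQiS dSP.
have := minor_complete matroidB defT (complSP l) minorQ.
by rewrite setIC setIU_disjoint // setIC setUC setIU_disjoint.
Qed.
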